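(* Let $g:\mathcal A_{\mathbf X}\to\mathbb R$ satisfy $g(x)-g(y)\le S_c(y,x)$ for all $x,y\in\mathcal A_{\mathbf X}$. Then $$v(x)=\min\{g(y)+S_c(y,x):y\in\mathcal A_{\mathbf X}\},\qquad x\in\mathbf V,$$ is the unique solution of $(DFE_c)$ on $\mathbf V$ which coincides with $g$ on $\mathcal A_{\mathbf X}$.
   Context: Network $\Gamma$ (finite arcs $\mathcal E$ closed under inversion $\tilde\gamma(s)=\gamma(1-s)$, vertices $\mathbf V$, connected), Hamiltonians $H_\gamma$ continuous, coercive, quasiconvex with $\mathrm{Int}\{H_\gamma(s,\cdot)\le b\}=\{H_\gamma(s,\cdot)<b\}$, $H_{\tilde\gamma}(s,p)=H_\gamma(1-s,-p)$; $a_\gamma=\max_s\min_pH_\gamma$, $c_\gamma$ = least level admitting a periodic viscosity subsolution, $a_0=\max\{\max_{\gamma\text{ not closed}}a_\gamma,\max_{\gamma\text{ closed}}c_\gamma\}$, $\min_pH_\gamma(s,p)$ constant in $s$ whenever $a_\gamma=a_0$. Graph $\mathbf X=(\mathbf V,\mathbf E)$, bijection $\Psi:\mathbf E\to\mathcal E$, $\mathrm o(e)=\Psi(e)(0)$, $\mathrm t(e)=\Psi(e)(1)$, $-e=\Psi^{-1}(\widetilde{\Psi(e)})$, $\mathbf E_x=\{e:\mathrm o(e)=x\}$, $\sigma_a(e)=\int_0^1\max\{p:H_{\Psi(e)}(t,p)=a\}dt$. Paths $\xi=(e_1,\dots,e_M)$, $M\ge 1$, $\mathrm t(e_j)=\mathrm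 o(e_{j+1})$; cycles: $\mathrm t(e_M)=\mathrm o(e_1)$; incident on $y$ if some $e_i$ has $y$ as endpoint; $\sigma_a(\xi)=\sum\sigma_a(e_i)$; $S_a(x,y)=\inf\{\sigma_a(\xi):\xi$ path linking $x$ to $y\}$. $(DFE_a)$: $u(x)=\min_{e\in\mathbf E_x}(u(\mathrm t(e))+\sigma_a(-e))$, $x\in\mathbf V$; subsolution: $u(\mathrm t(e))-u(\mathrm o(e))\le\sigma_a(e)$ $\forall e$. Critical value $c=\min\{a\ge a_0:(DFE_a)$ has a subsolution$\}$. Projected Aubry set: $\mathcal A_{\mathbf X}=\{y\in\mathbf V:$ there is a cycle $\xi$ incident on $y$ with $\sigma_c(\xi)=0\}$ (it is nonempty). *)

From mathcomp Require Import all_boot.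
From Stdlib Require Import Reals ClassicalEpsilon.

Set Implicit Arguments.
Unset Strict Implicit.
Unset Printing Implicit Defensive.

Local Open Scope R_scope.

Section Graph.
Variables (V E : finType) (o t : E -> V).

Fixpoint chained (p : seq E) : Prop :=
  match p with
  | [::] => True
  | e :: p' => match p' with
               | [::] => True
               | e' :: _ => t e = o e' /\ chained p'
               end
  end.

Definition links (x y : V) (p : seq E) : Prop :=
  match p with
  | [::] => False
  | e :: p' => [/\ o e = x, t (last e p') = y & chained p]
  end.

Definition is_cycle (p : seq E) : Prop :=
  match p with
  | [::] => False
  | e :: _ => links (o e) (o e) p
  end.

Definition incident (p : seq E) (y : V) : Prop :=
  exists2 e, e \in p & (o e = y \/ t e = y).

Definition sigma_path (sig : E -> R) (p : seq E) : R :=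
  foldr (fun e acc => sig e + acc) 0 p.

Definition is_glb (P : R -> Prop) (m : R) : Prop :=
  (forall s, P s -> m <= s) /\ (forall m', (forall s, P s -> m' <= s) -> m' <= m).

Definition is_min (P : R -> Prop) (m : R) : Prop :=
  P m /\ (forall s, P s -> m <= s).

Definition Sdist (sig : E -> R) (x y : V) : R :=
  epsilon (inhabits 0)
    (is_glb (fun s => exists p, links x y p /\ s = sigma_path sig p)).

Variable neg : E -> E.

Definition dfe_subsol (sig : E -> R) (u : V -> R) : Prop :=
  forall e, u (t e) - u (o e) <= sig e.

Definition dfe_sol (sig : E -> R) (u : V -> R) : Prop :=
  forall x, is_min (fun s => exists2 e, o e = x & s = u (t e) + sig (neg e)) (u x).

Definition is_critical (sigma : R -> E -> R) (a0 c : R) : Prop :=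
  is_min (fun a => a0 <= a /\ exists u, dfe_subsol (sigma a) u) c.

Definition connected : Prop :=
  forall x y : V, x <> y -> exists p, links x y p.

Definition aubry (sig : E -> R) (y : V) : Prop :=
  exists p, [/\ is_cycle p, incident p y & sigma_path sig p = 0].

Definition vmin (sig : E -> R) (g : V -> R) (x : V) : R :=
  epsilon (inhabits 0)
    (is_min (fun s => exists2 y, aubry sig y & s = g y + Sdist sig y x)).

End Graph.

(* Any subsolution u satisfies u y - u x <= sigma(p) along every path p from x
   to y, so S_c is a finite infimum obeying the triangle inequality, and a
   zero-weight cycle through y gives S_c(y,y) <= 0 on the Aubry set.  The
   minimum v of the cones g(y) + S_c(y,.) over Aubry points then equals g on the
   Aubry set by the compatibility of g, and cutting an optimal path at its last
   arc shows that v solves (DFE_c).  Conversely a solution u is a subsolution,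
   whence u <= v; and following from x the arcs that realize the minimum in
   (DFE_c), finiteness forces a repetition, i.e. a zero-weight cycle, so some
   Aubry point y satisfies u x = u y + sigma(walk from y to x) >= v x. *)

From mathcomp Require Import all_boot.
From Stdlib Require Import Reals Lra Classical ClassicalEpsilon.

Set Implicit Arguments.
Unset Strict Implicit.
Unset Printing Implicit Defensive.
Local Open Scope R_scope.

Lemma fintype_argmin (T : finType) (P : T -> Prop) (f : T -> R) :
  (exists x, P x) -> exists x, P x /\ forall y, P y -> f x <= f y.
Proof.
suff seq_argmin (s : seq T) : (exists2 x, x \in s & P x) ->
    exists x, [/\ x \in s, P x & forall y, y \in s -> P y -> f x <= f y].
  move=> [x Px]; have [|m [_ Pm minm]] := seq_argmin (enum T).
    by exists x; rewrite ?mem_enum.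
  by exists m; split=> // y Py; apply: minm; rewrite ?mem_enum.
elim: s => [[]//|a s IH] [x xs Px].
have [/IH [m [ms Pm minm]]|nos] := classic (exists2 y, y \in s & P y).
  have [[Pa lt_am]|not_lt] := classic (P a /\ f a < f m).
    exists a; split=> [||y]; rewrite ?mem_head //.
    by rewrite inE => /predU1P [->|ys /(minm y ys)]; lra.
  exists m; split=> [||y]; rewrite ?inE ?ms ?orbT //.
  case/predU1P=> [-> Pa|]; last exact: minm.
  by apply: Rnot_lt_le => lt_am; apply: not_lt.
have Pa : P a.
  by move: xs; rewrite inE => /predU1P [<- //|xs]; case: nos; exists x.
exists a; split=> [||y]; rewrite ?mem_head //.
by rewrite inE => /predU1P [->|ys Py]; [lra | case: nos; exists y].
Qed.

Lemma glb_exists (P : R -> Prop) (b : R) :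
  (exists r, P r) -> (forall r, P r -> b <= r) -> exists m, is_glb P m.
Proof.
move=> [r0 Pr0] lb.
have [|| m [ub_m lub_m]] := completeness (fun r => P (- r)).
- by exists (- b) => r /lb; lra.
- by exists (- r0); rewrite /= Ropp_involutive.
exists (- m); split=> [r Pr | m' lb_m'].
  by have := ub_m (- r); rewrite /= Ropp_involutive => /(_ Pr); lra.
suff : m <= - m' by lra.
by apply: lub_m => r /lb_m'; lra.
Qed.

Lemma iter_repeats (T : finType) (f : T -> T) (x : T) :
  exists i j : nat, (i < j)%nat /\ iter i f x = iter j f x.
Proof.
have /trajectP [i lt_i eq_i] := looping_order f x.
by exists i, (order f x).
Qed.

Section Walks.
Variables (V E : finType) (o t : E -> V).

(* Unlike paths, walks may be empty (between equal endpoints), so that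
   concatenation and splitting hold without side conditions. *)
Definition walk (x y : V) (p : seq E) : Prop :=
  if p is [::] then x = y else links o t x y p.

Lemma walk_cons x y e p : walk x y (e :: p) <-> o e = x /\ walk (t e) y p.
Proof.
case: p => [|f p]; rewrite /walk /links /=.
  by split=> [[-> -> _]|[-> ->]].
by split=> [[-> -> [-> ?]]|[-> [<- -> ?]]].
Qed.

Lemma links_walk x y p : links o t x y p <-> p <> [::] /\ walk x y p.
Proof. by case: p => [|e p]; split=> //; case. Qed.

Lemma walk_cat x y z p q : walk x y p -> walk y z q -> walk x z (p ++ q).
Proof.
elim: p x => [|e p IH] x /=; first by move=> ->.
by move=> /walk_cons [oe pw] qw; apply/walk_cons; split=> //; apply: IH.
Qed.

Lemma walk_catP x z p q : walk x z (p ++ q) -> exists2 y, walk x y p & walk y z q.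
Proof.
elim: p x => [|e p IH] x /=; first by exists x.
case/walk_cons=> oe /IH [y pw qw].
by exists y => //; apply/walk_cons.
Qed.

Lemma walk_rcons x y p e : walk x y (rcons p e) <-> walk x (o e) p /\ t e = y.
Proof.
rewrite -cats1; split=> [/walk_catP [m pw /walk_cons [-> ->]] // | [pw te]].
by apply: walk_cat pw _; apply/walk_cons.
Qed.

Variable s : E -> R.

Lemma sigma_path_cons e p : sigma_path s (e :: p) = s e + sigma_path s p.
Proof. by []. Qed.

Lemma sigma_path_cat p q : sigma_path s (p ++ q) = sigma_path s p + sigma_path s q.
Proof. by elim: p => [|e p IH] /=; [rewrite Rplus_0_l | rewrite IH Rplus_assoc]. Qed.

Lemma sigma_path_rcons p e : sigma_path s (rcons p e) = sigma_path s p + s e.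
Proof. by rewrite -cats1 sigma_path_cat /= Rplus_0_r. Qed.

Lemma subsol_le_walk u x y p :
  dfe_subsol o t s u -> walk x y p -> u y - u x <= sigma_path s p.
Proof.
move=> u_sub; elim: p x => [|e p IH] x /=; first by move=> ->; lra.
by case/walk_cons=> <- /IH; have := u_sub e; lra.
Qed.

Lemma closed_walk_cycle y p :
  walk y y p -> p <> [::] -> is_cycle o t p /\ incident o t p y.
Proof.
case: p => [|e p] pw // _; have [oe _] := iffLR (walk_cons y y e p) pw.
by split; [rewrite /is_cycle oe | exists e; [exact: mem_head | left]].
Qed.

Lemma links_cat x y z p q : links o t x y p -> links o t y z q -> links o t x z (p ++ q).
Proof.
move=> /links_walk [p0 xyp] /links_walk [_ yzq]; apply/links_walk.
by split; [case: p p0 {xyp} | exact: walk_cat xyp yzq].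
Qed.

Lemma cycle_rotate p y : is_cycle o t p -> incident o t p y ->
  exists q, [/\ q <> [::], walk y y q & sigma_path s q = sigma_path s p].
Proof.
move=> cyc [e ep ey].
have [a {cyc}] : exists a, walk a a p by case: p cyc {ep} => [//|e0 p0] cyc; exists (o e0).
case/splitPr: ep => p1 p2 /walk_catP [m p1w /walk_cons [oe p2w]].
rewrite sigma_path_cat sigma_path_cons.
case: ey => <-.
- exists (e :: p2 ++ p1); split=> //.
    by apply/walk_cons; split=> //; apply: walk_cat p2w _; rewrite oe.
  by rewrite sigma_path_cons sigma_path_cat; lra.
- exists (rcons (p2 ++ p1) e); split; first by case: (p2 ++ p1).
    by apply/walk_rcons; split=> //; apply: walk_cat p2w _; rewrite oe.
  by rewrite sigma_path_rcons sigma_path_cat; lra.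
Qed.

End Walks.

Section Reversal.
Variables (V E : finType) (o t : E -> V) (neg : E -> E).
Hypotheses (negK : forall e, neg (neg e) = e) (o_neg : forall e, o (neg e) = t e).

Lemma t_neg e : t (neg e) = o e.
Proof. by rewrite -{2}(negK e) o_neg. Qed.

Lemma connected_links_total (e0 : E) :
  connected o t -> forall x y, exists p, links o t x y p.
Proof.
move=> conn.
have out x : exists e, o e = x.
  have [->|x_ne] := classic (x = o e0); first by exists e0.
  by have [[|e p] // [oe _ _]] := conn x (o e0) x_ne; exists e.
move=> x y; have [<-|xy] := classic (x = y); last exact: conn.
have [e oe] := out x; exists [:: e; neg e]; apply/links_walk; split=> //.
by apply/walk_cons; split=> //; apply/walk_cons; rewrite o_neg t_neg.
Qed.

Variable s : E -> R.

Lemma sol_subsol u : dfe_sol o t neg s u -> dfe_subsol o t s u.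
Proof.
move=> u_sol f; have [_ minu] := u_sol (t f).
by have := minu _ (ex_intro2 _ _ (neg f) (o_neg f) erefl); rewrite t_neg negK; lra.
Qed.

Section OptimalArcs.
Variables (u : V -> R) (nx : V -> E) (x : V).
Hypothesis nx_optimal : forall a, o (nx a) = a /\ u a = u (t (nx a)) + s (neg (nx a)).

Local Notation xs k := (iter k (fun a => t (nx a)) x).

Lemma optimal_arcs_walk i j : (i <= j)%nat -> exists p,
  [/\ size p = (j - i)%nat, walk o t (xs j) (xs i) p & sigma_path s p = u (xs i) - u (xs j)].
Proof.
have refl_walk k : exists p, [/\ size p = (k - k)%nat, walk o t (xs k) (xs k) p
    & sigma_path s p = u (xs k) - u (xs k)].
  by exists [::]; rewrite subnn /=; split=> //; lra.
elim: j => [|j IH]; first by rewrite leqn0 => /eqP ->.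
rewrite leq_eqVlt ltnS => /predU1P [-> //|/[dup] le_ij /IH [p [sz jip sp]]].
have [oxj uxj] := nx_optimal (xs j).
exists (neg (nx (xs j)) :: p); split.
- by rewrite /= sz subSn.
- by apply/walk_cons; rewrite o_neg t_neg oxj.
- by rewrite sigma_path_cons sp uxj /=; lra.
Qed.

End OptimalArcs.

Lemma sol_aubry_calibrated u x : dfe_sol o t neg s u ->
  exists2 y, aubry o t s y & exists p, walk o t y x p /\ sigma_path s p = u x - u y.
Proof.
move=> u_sol.
have optimal_arc a : exists e, o e = a /\ u a = u (t e) + s (neg e).
  by have [[e oe ue] _] := u_sol a; exists e.
have [nx nx_opt] := choice _ optimal_arc.
have [i [j [lt_ij xs_ij]]] := iter_repeats (fun a => t (nx a)) x.
exists (iter i (fun a => t (nx a)) x).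
  have [p [sz jip sp]] := optimal_arcs_walk x nx_opt (ltnW lt_ij).
  rewrite -xs_ij in jip sp.
  have p0 : p <> [::] by move=> p0; move: lt_ij; rewrite -subn_gt0 -sz p0.
  have [cyc inc] := closed_walk_cycle jip p0.
  by exists p; split=> //; rewrite sp; lra.
by have [p [_ ip sp]] := optimal_arcs_walk x nx_opt (leq0n i); exists p.
Qed.

End Reversal.

Section Distance.
Variables (V E : finType) (o t : E -> V) (s : E -> R).
Hypothesis links_total : forall x y, exists p, links o t x y p.
Variable u0 : V -> R.
Hypothesis u0_sub : dfe_subsol o t s u0.

Local Notation S := (Sdist o t s).

Lemma Sdist_glb x y :
  is_glb (fun r => exists p, links o t x y p /\ r = sigma_path s p) (S x y).
Proof.
apply: epsilon_spec; have [p xyp] := links_total x y.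
apply: (@glb_exists _ (u0 y - u0 x)); first by exists (sigma_path s p), p.
by move=> _ [q [/links_walk [_ xyq] ->]]; apply: subsol_le_walk xyq.
Qed.

Lemma Sdist_le_links x y p : links o t x y p -> S x y <= sigma_path s p.
Proof. by move=> xyp; apply: (proj1 (Sdist_glb x y)); exists p. Qed.

Lemma Sdist_ge x y m : (forall p, links o t x y p -> m <= sigma_path s p) -> m <= S x y.
Proof. by move=> lb; apply: (proj2 (Sdist_glb x y)) => _ [p [/lb ? ->]]. Qed.

Lemma subsol_le_Sdist u x y : dfe_subsol o t s u -> u y - u x <= S x y.
Proof.
by move=> u_sub; apply: Sdist_ge => p /links_walk [_ xyp]; apply: subsol_le_walk xyp.
Qed.

Lemma Sdist_le_arc e : S (o e) (t e) <= s e.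
Proof.
have : links o t (o e) (t e) [:: e] by apply/links_walk; split=> //; apply/walk_cons.
by move/Sdist_le_links; rewrite sigma_path_cons /= Rplus_0_r.
Qed.

Lemma Sdist_triangle x y z : S x z <= S x y + S y z.
Proof.
suff : S x z - S y z <= S x y by lra.
apply: Sdist_ge => p xyp; suff : S x z - sigma_path s p <= S y z by lra.
apply: Sdist_ge => q yzq.
by have := Sdist_le_links (links_cat xyp yzq); rewrite sigma_path_cat; lra.
Qed.

Lemma Sdist_le_walk x y p : S x x <= 0 -> walk o t x y p -> S x y <= sigma_path s p.
Proof. by case: p => [Sxx <- //|e p _]; apply: Sdist_le_links. Qed.

Lemma aubry_Sdist_nonpos y : aubry o t s y -> S y y <= 0.
Proof.
move=> [p [cyc inc sp0]]; have [q [q0 yyq sq]] := cycle_rotate s cyc inc.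
by rewrite -sp0 -sq; apply: Sdist_le_links; apply/links_walk.
Qed.

Lemma Sdist_last_arc y x : S y y <= 0 -> exists f, t f = x /\ S y (o f) + s f <= S y x.
Proof.
move=> Syy.
have [f [tf minf]] : exists f, t f = x /\
    forall f', t f' = x -> S y (o f) + s f <= S y (o f') + s f'.
  apply: fintype_argmin; have [p yxp] := links_total y x.
  by case/lastP: p yxp => [//|p f] /links_walk [_ /walk_rcons [_ tf]]; exists f.
exists f; split=> //; apply: Sdist_ge => p.
case/lastP: p => [//|p f'] /links_walk [_ /walk_rcons [yp tf']].
by rewrite sigma_path_rcons; have := minf f' tf'; have := Sdist_le_walk Syy yp; lra.
Qed.

Variables (neg : E -> E) (g : V -> R).
Hypotheses (negK : forall e, neg (neg e) = e) (o_neg : forall e, o (neg e) = t e).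
Hypothesis aubry_nonempty : exists y, aubry o t s y.
Hypothesis g_compat : forall x y, aubry o t s x -> aubry o t s y ->
  g x - g y <= Sdist o t s y x.
Local Notation v := (vmin o t s g).

Lemma vmin_spec x : is_min (fun r => exists2 y, aubry o t s y & r = g y + S y x) (v x).
Proof.
apply: epsilon_spec.
have [y [Ay miny]] := fintype_argmin (fun y => g y + S y x) aubry_nonempty.
by exists (g y + S y x); split=> [|_ [z Az ->]]; [exists y | exact: miny].
Qed.

Lemma vmin_aubry x : aubry o t s x -> v x = g x.
Proof.
move=> Ax; have [[y Ay ->] minv] := vmin_spec x.
apply: Rle_antisym; last by have := g_compat Ax Ay; lra.
have := minv _ (ex_intro2 _ _ x Ax erefl).
by have := aubry_Sdist_nonpos Ax; lra.
Qed.

Lemma vmin_le_arc e : v (o e) <= v (t e) + s (neg e).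
Proof.
have [[y Ay vte] _] := vmin_spec (t e); have [_ minv] := vmin_spec (o e).
have := minv _ (ex_intro2 _ _ y Ay erefl).
have := Sdist_triangle y (t e) (o e).
by have := Sdist_le_arc (neg e); rewrite o_neg (t_neg negK o_neg); lra.
Qed.

Lemma vmin_sol : dfe_sol o t neg s v.
Proof.
move=> x; split; last by move=> _ [e <- ->]; apply: vmin_le_arc.
have [[y Ay vx] _] := vmin_spec x.
have [f [tf Sf]] := Sdist_last_arc x (aubry_Sdist_nonpos Ay).
exists (neg f); rewrite ?o_neg ?(t_neg negK o_neg) ?negK //.
apply: Rle_antisym.
  by have := vmin_le_arc (neg f); rewrite o_neg (t_neg negK o_neg) negK tf.
by have [_ minv] := vmin_spec (o f); have := minv _ (ex_intro2 _ _ y Ay erefl); lra.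
Qed.

Lemma sol_eq_vmin u : dfe_sol o t neg s u ->
  (forall x, aubry o t s x -> u x = g x) -> forall x, u x = v x.
Proof.
move=> u_sol u_g x; apply: Rle_antisym.
  have [[y Ay ->] _] := vmin_spec x; rewrite -(u_g y Ay).
  by have := subsol_le_Sdist y x (sol_subsol negK o_neg u_sol); lra.
have [y Ay [p [yxp sp]]] := sol_aubry_calibrated negK o_neg x u_sol.
have [_ minv] := vmin_spec x; have := minv _ (ex_intro2 _ _ y Ay erefl).
have := Sdist_le_walk (aubry_Sdist_nonpos Ay) yxp.
by rewrite (u_g y Ay) in sp; lra.
Qed.

End Distance.

Theorem theorem6p22 (V E : finType) (o t : E -> V) (neg : E -> E)
  (sigma : R -> E -> R) (a0 c : R) (g : V -> R)
  (Hrev_inv : forall e, neg (neg e) = e)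
  (Hrev_ne : forall e, neg e <> e)
  (Hrev_o : forall e, o (neg e) = t e)
  (Hconn : connected o t)
  (Hc : is_critical o t sigma a0 c)
  (HA : exists x, aubry o t (sigma c) x)
  (Hg : forall x y, aubry o t (sigma c) x -> aubry o t (sigma c) y ->
          g x - g y <= Sdist o t (sigma c) y x) :
  dfe_sol o t neg (sigma c) (vmin o t (sigma c) g)
  /\ (forall x, aubry o t (sigma c) x -> vmin o t (sigma c) g x = g x)
  /\ (forall u, dfe_sol o t neg (sigma c) u ->
        (forall x, aubry o t (sigma c) x -> u x = g x) ->
        forall x, u x = vmin o t (sigma c) g x).
Proof.
have [[_ [u0 u0_sub]] _] := Hc.
have [e0] : inhabited E by case: HA => _ [[|e p] [] //]; constructor.
have links_total := connected_links_total Hrev_inv Hrev_o e0 Hconn.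
split; [|split].
- exact (vmin_sol links_total u0_sub g Hrev_inv Hrev_o HA).
- exact (vmin_aubry links_total u0_sub HA Hg).
- exact (sol_eq_vmin links_total u0_sub Hrev_inv Hrev_o HA).
Qed.
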